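(* Let $G>0$, $T>0$, and let $F\colon\mathbb R\to\mathbb R$ be continuous and $T$-periodic. There exists $a_0\in(0,1)$ such that for every $a$ with $a_0\le a<1$, the set $\mathbb R\times\Gamma_a$ is a bound set for $v_\lambda$ for all $\lambda\in[0,1]$.
   Context: For $\lambda\in[0,1]$ consider on $\mathbb R\times\Omega$, $\Omega=(-1,1)\times\mathbb R$, the system $\dot t=1$, $\dot x=p$, $\dot p=\big(G\sqrt{1-x^2}-\frac{p^2}{1-x^2}\big)x-\lambda(1-x^2)F(t)$, with right-hand side $v_\lambda(t,x,p)$; its solutions are unique, giving a local flow $\phi^\lambda$. For $0<a<1$, $\Gamma_a=\{(x,p)\in\mathbb R^2:|x|\le a\}$. For a closed set $E\subset\mathbb R\times\Omega$, $E$ is a bound set for $v_\lambda$ if for every $\epsilon>0$ there is no point $z\in\partial E$ with $\phi^\lambda_s(z)\in E$ for all $s\in(-\epsilon,\epsilon)$. *)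

From Stdlib Require Import Reals.
From Coquelicot Require Import Coquelicot.
Open Scope R_scope.

Definition pt := (R * R * R)%type.
Definition pt_t (z : pt) : R := fst (fst z).
Definition pt_x (z : pt) : R := snd (fst z).
Definition pt_p (z : pt) : R := snd z.

Definition inOmega (z : pt) : Prop := -1 < pt_x z < 1.

Definition vp (G lam : R) (F : R -> R) (t x p : R) : R :=
  (G * sqrt (1 - x ^ 2) - p ^ 2 / (1 - x ^ 2)) * x - lam * (1 - x ^ 2) * F t.

(* (tt, xx, pp) is a solution of  t' = 1, x' = p, p' = vp ...  on (-eps, eps)
   staying in R x Omega, with initial value z at s = 0.  Since solutions of
   v_lambda are unique, phi^lambda_s(z) is defined for s in (-eps,eps) iff such a
   solution exists, and then phi^lambda_s(z) = (tt s, xx s, pp s). *)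
Definition is_solution_on (G lam : R) (F : R -> R) (eps : R) (z : pt)
    (tt xx pp : R -> R) : Prop :=
  tt 0 = pt_t z /\ xx 0 = pt_x z /\ pp 0 = pt_p z /\
  forall s, -eps < s < eps ->
    inOmega (tt s, xx s, pp s) /\
    is_derive tt s 1 /\
    is_derive xx s (pp s) /\
    is_derive pp s (vp G lam F (tt s) (xx s) (pp s)).

Definition pdist (z w : pt) : R :=
  Rmax (Rabs (pt_t z - pt_t w)) (Rmax (Rabs (pt_x z - pt_x w)) (Rabs (pt_p z - pt_p w))).

Definition rel_closed (E : pt -> Prop) : Prop :=
  (forall z, E z -> inOmega z) /\
  forall z, inOmega z -> (forall r, 0 < r -> exists w, pdist w z < r /\ E w) -> E z.

Definition in_boundary (E : pt -> Prop) (z : pt) : Prop :=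
  inOmega z /\
  forall r, 0 < r ->
    (exists w, pdist w z < r /\ E w) /\
    (exists w, pdist w z < r /\ inOmega w /\ ~ E w).

Definition bound_set (G lam : R) (F : R -> R) (E : pt -> Prop) : Prop :=
  rel_closed E /\
  forall eps, 0 < eps ->
    ~ exists z, in_boundary E z /\
      exists tt xx pp, is_solution_on G lam F eps z tt xx pp /\
        forall s, -eps < s < eps -> E (tt s, xx s, pp s).

Definition RxGamma (a : R) (z : pt) : Prop := Rabs (pt_x z) <= a.

(** A solution leaving through the boundary of R x Gamma_a would touch it at a
    point where x = a (say) has a local maximum, so x' = p vanishes there and
    x'' = vp(t, a, 0) must be nonpositive.  But
    vp(t, a, 0) = sqrt(1-a^2) (G a - lam sqrt(1-a^2) F t), and since F is
    continuous and periodic, hence bounded, this is positive once a is close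
    enough to 1.  The edge x = -a is the edge x = a for -F. *)

From Stdlib Require Import Reals Lra.
From Coquelicot Require Import Coquelicot.
Open Scope R_scope.

Lemma periodic_Zmult (F : R -> R) (T : R) :
  (forall t, F (t + T) = F t) -> forall (k : Z) t, F (t + IZR k * T) = F t.
Proof.
  intros HP k t. induction k using Z.peano_ind.
  - now rewrite Rmult_0_l, Rplus_0_r.
  - rewrite succ_IZR.
    replace (t + (IZR k + 1) * T) with (t + IZR k * T + T) by ring.
    now rewrite HP.
  - rewrite <- Z.sub_1_r, minus_IZR, <- HP.
    replace (t + (IZR k - 1) * T + T) with (t + IZR k * T) by ring.
    exact IHk.
Qed.

Lemma periodic_continuous_bounded (F : R -> R) (T : R) :
  0 < T -> (forall t, continuity_pt F t) -> (forall t, F (t + T) = F t) ->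
  exists M, 0 < M /\ forall t, Rabs (F t) <= M.
Proof.
  intros HT Hc HP.
  destruct (continuity_ab_maj F 0 T ltac:(lra) (fun c _ => Hc c)) as [tmax [Hmax _]].
  destruct (continuity_ab_min F 0 T ltac:(lra) (fun c _ => Hc c)) as [tmin [Hmin _]].
  exists (Rabs (F tmax) + Rabs (F tmin) + 1). split.
  { pose proof (Rabs_pos (F tmax)). pose proof (Rabs_pos (F tmin)). lra. }
  intros t.
  set (k := (up (t / T) - 1)%Z).
  assert (Hk : 0 <= t - IZR k * T <= T).
  { destruct (archimed (t / T)) as [Hup1 Hup2]. unfold k. rewrite minus_IZR.
    assert (E : t = t / T * T) by (field; lra).
    split; nra. }
  replace t with (t - IZR k * T + IZR k * T) by ring.
  rewrite periodic_Zmult by exact HP.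
  pose proof (Hmax _ Hk). pose proof (Hmin _ Hk).
  pose proof (Rle_abs (F tmax)). pose proof (Rabs_maj2 (F tmin)).
  pose proof (Rabs_pos (F tmax)). pose proof (Rabs_pos (F tmin)).
  apply Rabs_le. lra.
Qed.

Lemma is_derive_pos_right_increasing (f : R -> R) (c l : R) :
  is_derive f c l -> 0 < l ->
  exists d, 0 < d /\ forall h, 0 < h < d -> f c < f (c + h).
Proof.
  intros Hf Hl. apply is_derive_Reals in Hf.
  destruct (Hf l Hl) as [d Hd]. exists d. split; [apply cond_pos|].
  intros h Hh.
  assert (Hq : Rabs ((f (c + h) - f c) / h - l) < l)
    by (apply Hd; [lra | rewrite Rabs_right; lra]).
  apply Rabs_def2 in Hq.
  set (q := (f (c + h) - f c) / h) in Hq.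
  assert (E : f (c + h) - f c = q * h) by (unfold q; field; lra).
  nra.
Qed.

Lemma local_max_second_derivative_nonpos (x p : R -> R) (eps l : R) :
  0 < eps ->
  (forall s, -eps < s < eps -> is_derive x s (p s)) ->
  is_derive p 0 l ->
  (forall s, -eps < s < eps -> x s <= x 0) ->
  p 0 = 0 /\ l <= 0.
Proof.
  intros Heps Dx Dp Hmax.
  assert (Hp0 : p 0 = 0).
  { pose (pr := exist _ (p 0) (proj1 (is_derive_Reals _ _ _) (Dx 0 ltac:(lra)))
                : derivable_pt x 0).
    change (derive_pt x 0 pr = 0).
    apply (deriv_maximum x (- eps) eps); try lra.
    intros s Hs1 Hs2. apply Hmax. lra. }
  split; [exact Hp0|].
  apply Rnot_lt_le. intros Hl.
  destruct (is_derive_pos_right_increasing p 0 l Dp Hl) as [d [Hd Hinc]].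
  set (h := Rmin d eps / 2).
  assert (Hh : 0 < h < d /\ h < eps).
  { unfold h. pose proof (Rmin_l d eps). pose proof (Rmin_r d eps).
    pose proof (Rmin_glb_lt d eps 0 Hd Heps). lra. }
  destruct (MVT_cor2 x p 0 h ltac:(lra)
              (fun s _ => proj1 (is_derive_Reals _ _ _) (Dx s ltac:(lra))))
    as [c [Ec Hc]].
  pose proof (Hinc c ltac:(lra)) as Hpc. rewrite Rplus_0_l, Hp0 in Hpc.
  pose proof (Hmax h ltac:(lra)).
  nra.
Qed.

Lemma pdist_x_le (z w : pt) : Rabs (pt_x z - pt_x w) <= pdist z w.
Proof.
  unfold pdist. eapply Rle_trans; [apply Rmax_l | apply Rmax_r].
Qed.

Lemma RxGamma_rel_closed (a : R) : a < 1 -> rel_closed (RxGamma a).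
Proof.
  intros Ha. split.
  - intros z Hz. unfold RxGamma, inOmega in *. apply Rabs_le_between in Hz. lra.
  - intros z _ Hcl. unfold RxGamma.
    apply Rnot_lt_le. intros Hz.
    destruct (Hcl (Rabs (pt_x z) - a) ltac:(lra)) as [w [Hw Ew]].
    pose proof (pdist_x_le w z). pose proof (Rabs_triang_inv (pt_x z) (pt_x w)).
    unfold RxGamma in Ew. rewrite (Rabs_minus_sym (pt_x z)) in *. lra.
Qed.

Lemma in_boundary_RxGamma (a : R) (z : pt) :
  in_boundary (RxGamma a) z -> a <= Rabs (pt_x z).
Proof.
  intros [_ Hb]. apply Rnot_lt_le. intros Hz.
  destruct (Hb (a - Rabs (pt_x z)) ltac:(lra)) as [_ [w [Hw [_ NEw]]]].
  apply NEw. unfold RxGamma.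
  pose proof (pdist_x_le w z). pose proof (Rabs_triang_inv (pt_x w) (pt_x z)). lra.
Qed.

Lemma bound_set_RxGamma (G lam : R) (F : R -> R) (a : R) :
  a < 1 ->
  (forall t, 0 < vp G lam F t a 0) ->
  (forall t, vp G lam F t (- a) 0 < 0) ->
  bound_set G lam F (RxGamma a).
Proof.
  intros Ha Hup Hlow. split; [exact (RxGamma_rel_closed a Ha)|].
  intros eps Heps [z [Hbd [tt [xx [pp [[_ [Hx0 [_ Hsol]]] Hin]]]]]].
  assert (Hstay : forall s, -eps < s < eps -> Rabs (xx s) <= a)
    by (intros s Hs; exact (Hin s Hs)).
  assert (Dx : forall s, -eps < s < eps -> is_derive xx s (pp s))
    by (intros s Hs; apply (Hsol s Hs)).
  assert (Dp : is_derive pp 0 (vp G lam F (tt 0) (xx 0) (pp 0)))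
    by (apply (Hsol 0); lra).
  assert (Hedge : Rabs (xx 0) = a).
  { apply Rle_antisym; [apply Hstay; lra|].
    rewrite Hx0. exact (in_boundary_RxGamma a z Hbd). }
  destruct (Rle_or_lt 0 (xx 0)) as [Hsign|Hsign].
  - rewrite Rabs_right in Hedge by lra.
    destruct (local_max_second_derivative_nonpos xx pp eps _ Heps Dx Dp)
      as [Hp0 Hl].
    { intros s Hs. rewrite Hedge. pose proof (Rle_abs (xx s)).
      pose proof (Hstay s Hs). lra. }
    rewrite Hedge, Hp0 in Hl. pose proof (Hup (tt 0)). lra.
  - rewrite Rabs_left in Hedge by lra.
    destruct (local_max_second_derivative_nonpos (fun s => - xx s) (fun s => - pp s)
                eps _ Heps (fun s Hs => is_derive_opp xx s _ (Dx s Hs))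
                (is_derive_opp pp 0 _ Dp))
      as [Hp0 Hl].
    { intros s Hs. pose proof (Rabs_maj2 (xx s)).
      pose proof (Hstay s Hs). lra. }
    change (- vp G lam F (tt 0) (xx 0) (pp 0) <= 0) in Hl.
    replace (xx 0) with (- a) in Hl by lra.
    replace (pp 0) with 0 in Hl by lra.
    pose proof (Hlow (tt 0)). lra.
Qed.

Lemma vp_at_rest (G lam : R) (F : R -> R) (t x : R) : -1 <= x <= 1 ->
  vp G lam F t x 0 = sqrt (1 - x ^ 2) * (G * x - lam * sqrt (1 - x ^ 2) * F t).
Proof.
  intros Hx.
  assert (Hs : sqrt (1 - x ^ 2) * sqrt (1 - x ^ 2) = 1 - x ^ 2)
    by (apply sqrt_sqrt; nra).
  unfold vp. rewrite <- Hs at 3. unfold Rdiv. ring.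
Qed.

Lemma vp_opp_state (G lam : R) (F : R -> R) (t x p : R) :
  vp G lam F t (- x) (- p) = - vp G lam (fun u => - F u) t x p.
Proof.
  unfold vp. replace ((- x) ^ 2) with (x ^ 2) by ring. unfold Rdiv. ring.
Qed.

Lemma vp_at_rest_pos (G lam M : R) (F : R -> R) (t a : R) :
  0 <= lam <= 1 -> Rabs (F t) <= M -> 1 / 2 <= a < 1 ->
  2 * M * sqrt (1 - a ^ 2) < G ->
  0 < vp G lam F t a 0.
Proof.
  intros Hlam HF Ha Hmargin.
  rewrite vp_at_rest by lra.
  set (s := sqrt (1 - a ^ 2)) in *.
  assert (Hs : 0 < s) by (apply sqrt_lt_R0; nra).
  apply Rabs_le_between in HF.
  assert (HlamF : lam * F t <= M) by nra.
  apply Rmult_le_compat_l with (r := s) in HlamF; [|lra].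
  assert (HG : 0 < G) by nra.
  assert (HGa : G / 2 <= G * a) by nra.
  apply Rmult_lt_0_compat; nra.
Qed.

(* Since 1 - a^2 <= 2 (1 - a), taking 1 - a0 <= delta^2 / 4 gives sqrt (1 - a^2) < delta. *)
Lemma margin_near_one (G M : R) : 0 < G -> 0 < M ->
  exists a0, 1 / 2 <= a0 < 1 /\
    forall a, a0 <= a < 1 -> 2 * M * sqrt (1 - a ^ 2) < G.
Proof.
  intros HG HM.
  set (delta := G / (2 * M)).
  assert (Hdelta : 0 < delta) by (unfold delta; apply Rdiv_lt_0_compat; lra).
  exists (Rmax (1 / 2) (1 - delta ^ 2 / 4)).
  pose proof (Rmax_l (1 / 2) (1 - delta ^ 2 / 4)).
  pose proof (Rmax_r (1 / 2) (1 - delta ^ 2 / 4)).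
  split.
  { split; [lra|]. apply Rmax_lub_lt; nra. }
  intros a Ha.
  assert (Hs : sqrt (1 - a ^ 2) < delta).
  { rewrite <- (sqrt_pow2 delta) by lra. apply sqrt_lt_1; nra. }
  replace G with (2 * M * delta) by (unfold delta; field; lra).
  apply Rmult_lt_compat_l; lra.
Qed.

Theorem lemma3p1 (G T : R) (F : R -> R) :
  0 < G -> 0 < T ->
  (forall t, continuity_pt F t) ->
  (forall t, F (t + T) = F t) ->
  exists a0, 0 < a0 < 1 /\
    forall a, a0 <= a < 1 ->
      forall lam, 0 <= lam <= 1 -> bound_set G lam F (RxGamma a).
Proof.
  intros HG HT Hc HP.
  destruct (periodic_continuous_bounded F T HT Hc HP) as [M [HM HFM]].
  destruct (margin_near_one G M HG HM) as [a0 [Ha0 Hmargin]].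
  exists a0. split; [lra|].
  intros a Ha lam Hlam.
  apply bound_set_RxGamma; [lra| |].
  - intros t. apply (vp_at_rest_pos G lam M); auto; lra.
  - intros t. pose proof (vp_opp_state G lam F t a 0) as E.
    rewrite Ropp_0 in E. rewrite E.
    assert (Hpos : 0 < vp G lam (fun u => - F u) t a 0).
    { apply (vp_at_rest_pos G lam M); auto; [|lra].
      rewrite Rabs_Ropp. apply HFM. }
    lra.
Qed.
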